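(* Let $G$ be a graph, $\mathcal{F}$ a set of cycles, $x \in V(G)$, and $Y \subseteq V(G)\setminus\{x\}$ such that $N[Y] \cap V(G - Y) \subseteq \{x\}$ and $G[\{x\}\cup Y]$ contains no $\mathcal{F}$-graph. Then $\iota(G,\mathcal{F}) = \iota(G - Y, \mathcal{F})$, and every $\mathcal{F}$-isolating set of $G - Y$ is an $\mathcal{F}$-isolating set of $G$.
   Context: All graphs are finite and simple; cycles are graphs isomorphic to $C_k$ for some $k\ge 3$. For a set $\mathcal{F}$ of graphs, an $\mathcal{F}$-graph is a graph isomorphic to a member of $\mathcal{F}$. For $X \subseteq V(G)$, $N[X]$ is the closed neighbourhood $\bigcup_{v\in X}(\{v\}\cup N(v))$, $G[X]$ is the subgraph induced by $X$, and $G - X$ is the subgraph induced by $V(G)\setminus X$. A set $D\subseteq V(G)$ is an $\mathcal{F}$-isolating set of $G$ if $G - N[D]$ contains no $\mathcal{F}$-graph as a subgraph; $\iota(G,\mathcal{F})$ is the minimum size of an $\mathcal{F}$-isolating set of $G$. *)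

(* Simple graph G = symmetric irreflexive relation e on a finType T;
   subgraphs induced by vertex sets S : {set T} are represented by S itself. *)
From Stdlib Require Import ClassicalDescription.
From mathcomp Require Import all_boot.
Set Implicit Arguments. Unset Strict Implicit. Unset Printing Implicit Defensive.

Definition asbool (P : Prop) : bool :=
  if excluded_middle_informative P then true else false.

Section Graphs.
Variables (T : finType) (e : rel T).

(* The induced subgraph G[S] contains a subgraph isomorphic to the cycle C_k:
   an injective cyclic sequence of k vertices of S, consecutive ones adjacent. *)
Definition has_cycle (S : {set T}) (k : nat) : Prop :=
  exists f : 'I_k -> T,
    [/\ injective f, (forall i, f i \in S) & (forall i, e (f i) (f (ordS i)))].

(* F is a set of cycles, given by the set of their lengths (each >= 3).
   G[S] contains an F-graph as a subgraph. *)
Definition hasF (F : nat -> Prop) (S : {set T}) : Prop :=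
  exists k, F k /\ has_cycle S k.

Definition Nbhd (S D : {set T}) : {set T} :=
  [set v in S | [exists u in D, (u == v) || e u v]].

Definition isolating (F : nat -> Prop) (S D : {set T}) : Prop :=
  D \subset S /\ ~ hasF F (S :\: Nbhd S D).

(* iota(G[S], F): minimum size of an F-isolating set of G[S]
   (S itself is always isolating when all lengths in F are >= 3) *)
Definition isol_num (F : nat -> Prop) (S : {set T}) : nat :=
  \big[minn/#|S|]_(D : {set T} | asbool (isolating F S D)) #|D|.

End Graphs.

(* A cycle that meets Y but leaves x |: Y must exit Y and later re-enter it.  Since x is
   the only vertex outside Y with a neighbour in Y, the vertex where it exits and the
   vertex from which it re-enters are both x, hence the same position of the cycle, so the
   cycle never left x |: Y.  Thus every F-cycle of G lies in G[x |: Y], which has none, or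
   avoids Y.  So an isolating set of G - Y isolates G; conversely, replacing D :&: Y by x
   turns an isolating set D of G into one of G - Y of no larger size, because a vertex
   outside Y dominated from Y is x itself. *)

From HB Require Import structures.
From Stdlib Require Import ClassicalDescription.
From mathcomp Require Import all_boot.
Set Implicit Arguments. Unset Strict Implicit. Unset Printing Implicit Defensive.

HB.instance Definition _ := SemiGroup.isComLaw.Build nat minn minnA minnC.

Lemma asboolP (P : Prop) : reflect P (asbool P).
Proof. by rewrite /asbool; case: excluded_middle_informative => ?; constructor. Qed.

Lemma val_iter_ordS k (i : 'I_k) n : val (iter n (@ordS k) i) = (i + n) %% k.
Proof.
elim: n => [|n IHn] /=; first by rewrite addn0 modn_small.
by rewrite IHn -addn1 modnDml addn1 addnS.
Qed.

Section Isolation.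
Variables (T : finType) (e : rel T) (F : nat -> Prop).

Lemma hasF_subset (S S' : {set T}) : S \subset S' -> hasF e F S -> hasF e F S'.
Proof.
move=> sSS' [k [Fk [f [finj fS fE]]]]; exists k; split=> //; exists f; split=> // i.
exact: subsetP sSS' _ (fS i).
Qed.

Lemma Nbhd_id (S : {set T}) : Nbhd e S S = S.
Proof.
apply/setP => v; rewrite inE andb_idr // => vS.
by apply/existsP; exists v; rewrite vS eqxx.
Qed.

Lemma isol_num_le (S D : {set T}) : isolating e F S D -> isol_num e F S <= #|D|.
Proof. by move=> /asboolP isoD; rewrite /isol_num (bigD1 D) //= geq_minl. Qed.

Hypothesis F_gt0 : forall k, F k -> 0 < k.

Lemma hasF0 : ~ hasF e F set0.
Proof. by case=> k [/F_gt0 k_gt0 [f [_ /(_ (Ordinal k_gt0))]]]; rewrite inE. Qed.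

Lemma isolating_self (S : {set T}) : isolating e F S S.
Proof. by split=> //; rewrite Nbhd_id setDv; apply: hasF0. Qed.

Lemma leq_isol_num (S1 S2 : {set T}) :
  (forall D, isolating e F S2 D -> exists2 D1, isolating e F S1 D1 & #|D1| <= #|D|) ->
  isol_num e F S1 <= isol_num e F S2.
Proof.
move=> sub12.
have le_card D : isolating e F S2 D -> isol_num e F S1 <= #|D|.
  by case/sub12=> D1 /isol_num_le; apply: leq_trans.
apply: (big_ind (fun m => isol_num e F S1 <= m)).
- exact/le_card/isolating_self.
- by move=> a b Ha Hb; rewrite leq_min Ha Hb.
- by move=> D /asboolP /le_card.
Qed.

End Isolation.

Section Exits.
Variables (T : finType) (e : rel T).

Definition exits_at (Y : {set T}) (x : T) : Prop :=
  forall u v, u \in Y -> v \notin Y -> e u v -> v = x.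

Lemma exits_at_Nbhd Y x :
  Nbhd e [set: T] Y :&: ~: Y \subset [set x] -> exits_at Y x.
Proof.
move=> HN u v uY vY euv; apply/set1P/(subsetP HN).
rewrite !inE vY andbT; apply/existsP; exists u.
by rewrite uY euv orbT.
Qed.

Hypothesis e_sym : symmetric e.
Variables (x : T) (Y : {set T}).
Hypothesis Yx : exits_at Y x.

Lemma closed_walk_exits_at (h : nat -> T) k :
  (forall n, e (h n) (h n.+1)) -> h k = h 0 ->
  (forall a b, a < k -> b < k -> h a = h b -> a = b) ->
  h 0 \in Y -> forall n, n < k -> h n \in x |: Y.
Proof.
move=> hE hk hinj h0Y n nk; apply/negPn/negP; rewrite in_setU1 negb_or.
case/andP=> hnx hnY.
(* [j] is where the walk first leaves [Y] and [m] the last vertex outside [Y] before it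
   closes up; both are [x], so [j = m] by injectivity. *)
have [j hjY jmin] := ex_minnP (ex_intro (fun m => h m \notin Y) n hnY).
have hjx : h j = x.
  case: j hjY jmin => [|j] hjY jmin; first by rewrite h0Y in hjY.
  apply: Yx hjY (hE j); apply/negPn/negP => /jmin.
  by rewrite ltnn.
have outside : exists m, (m < k) && (h m \notin Y) by exists n; rewrite nk hnY.
have bounded m : (m < k) && (h m \notin Y) -> m <= k by case/andP=> /ltnW.
have [m /andP[mk hmY] mmax] := ex_maxnP outside bounded.
have hmx : h m = x.
  apply: Yx hmY _; last by rewrite e_sym; apply: hE.
  have [mk1|km1] := ltnP m.+1 k.
    apply/negPn/negP => hmY1; suff : m.+1 <= m by rewrite ltnn.
    by apply: mmax; rewrite mk1 hmY1.
  have -> : m.+1 = k by apply/eqP; rewrite eqn_leq km1 mk.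
  by rewrite hk.
have jn : j <= n by apply: jmin.
have jm : j = m by apply: hinj; rewrite ?hjx ?hmx // (leq_ltn_trans jn nk).
have nm : n <= m by apply: mmax; rewrite nk hnY.
have nj : n = j by apply/eqP; rewrite eqn_leq jn jm nm.
by rewrite nj hjx eqxx in hnx.
Qed.

Lemma cycle_exits_at k (f : 'I_k -> T) :
  injective f -> (forall i, e (f i) (f (ordS i))) ->
  forall i0, f i0 \in Y -> forall i, f i \in x |: Y.
Proof.
move=> finj fE i0 fi0Y i.
pose h n := f (iter n (@ordS k) i0).
have hE n : e (h n) (h n.+1) by apply: fE.
have hk : h k = h 0.
  by congr f; apply: val_inj; rewrite val_iter_ordS modnDr modn_small.
have hinj a b : a < k -> b < k -> h a = h b -> a = b.
  move=> ak bk /finj /(congr1 val); rewrite !val_iter_ordS => /eqP.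
  by rewrite eqn_modDl !modn_small // => /eqP.
have [n nk <-] : exists2 n, n < k & h n = f i.
  exists ((k - i0 + i) %% k); first by rewrite ltn_mod (leq_ltn_trans _ (ltn_ord i)).
  congr f; apply: val_inj; rewrite val_iter_ordS modnDmr addnA subnKC ?modnDl ?modn_small //.
  exact: ltnW.
exact: closed_walk_exits_at hE hk hinj fi0Y n nk.
Qed.

Lemma hasF_exits_at (F : nat -> Prop) S :
  ~ hasF e F (x |: Y) -> hasF e F S -> hasF e F (S :\: Y).
Proof.
move=> noFxY [k [Fk [f [finj fS fE]]]]; exists k; split=> //; exists f; split=> // i.
rewrite inE fS andbT; apply/negP => fiY; apply: noFxY.
exists k; split=> //; exists f; split=> //.
exact: cycle_exits_at fiY.
Qed.

Lemma isolating_setC_setT F D :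
  ~ hasF e F (x |: Y) -> isolating e F (~: Y) D -> isolating e F [set: T] D.
Proof.
move=> noFxY [_ noF]; split=> // /(hasF_exits_at noFxY) FnotY.
apply/noF/(hasF_subset _ FnotY).
by apply/subsetP => v; rewrite !inE /= andbT => /andP[-> /negPf ->].
Qed.

Lemma isolating_setT_setC F D :
  x \notin Y -> isolating e F [set: T] D ->
  exists2 D', isolating e F (~: Y) D' & #|D'| <= #|D|.
Proof.
move=> xY [_ noF].
pose D' := D :\: Y :|: (if D :&: Y == set0 then set0 else [set x]).
have D'Y : D' \subset ~: Y.
  apply/subsetP => v; rewrite !inE; case/orP => [/andP[] //|].
  by case: ifP; rewrite ?inE // => _ /eqP ->.
have dom v : v \notin Y -> v \in Nbhd e [set: T] D -> v \in Nbhd e (~: Y) D'.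
  rewrite !inE /= => vY /existsP[u /andP[uD uv]]; rewrite vY; apply/existsP.
  case: (boolP (u \in Y)) => uY; last by exists u; rewrite !inE uY uD.
  have vx : v = x.
    by case/orP: uv => [/eqP uv | /(Yx uY vY)]; first by rewrite -uv uY in vY.
  have DY0 : D :&: Y != set0 by apply/set0Pn; exists u; rewrite inE uD.
  by exists x; rewrite vx /D' (negbTE DY0) !inE eqxx orbT.
exists D'.
  split=> //; apply: contra_not noF; apply: hasF_subset.
  apply/subsetP => v; rewrite in_setD in_setC => /andP[vN vY].
  by rewrite in_setD in_setT andbT; apply: contraNN vN; apply: dom.
rewrite -(cardsID Y D) addnC (leq_trans (leq_card_setU _ _)) // leq_add2l.
case: ifP => [_|/negbT/set0Pn[u uDY]]; first by rewrite cards0.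
by rewrite cards1 card_gt0; apply/set0Pn; exists u.
Qed.

End Exits.

Theorem lemma3 (T : finType) (e : rel T) (e_sym : symmetric e) (e_irr : irreflexive e)
  (F : nat -> Prop) (F_cycles : forall k, F k -> 3 <= k)
  (x : T) (Y : {set T}) (xY : x \notin Y)
  (HN : Nbhd e [set: T] Y :&: ~: Y \subset [set x])
  (HY : ~ hasF e F (x |: Y)) :
  isol_num e F [set: T] = isol_num e F (~: Y) /\
  (forall D : {set T}, isolating e F (~: Y) D -> isolating e F [set: T] D).
Proof.
have Yx := exits_at_Nbhd HN.
have F_gt0 k : F k -> 0 < k by move/F_cycles; apply: leq_trans.
split; last by move=> D; exact: (isolating_setC_setT e_sym Yx HY).
apply/eqP; rewrite eqn_leq; apply/andP; split; apply: leq_isol_num => //.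
- by move=> D /(isolating_setC_setT e_sym Yx HY) isoD; exists D.
- by move=> D; exact: (isolating_setT_setC Yx xY).
Qed.
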